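(* Let $X_1,X_2$ be Polish spaces, $\mu_1\in\mathcal P(X_1)$, $\mu_2\in\mathcal P^n(X_2)$ for some $n\in\mathbb N$, and $\pi\in\Pi(\mu_1,\mu_2)$. Then for $1<q\le 2$, $$D_q(\pi,\mu_1\otimes\mu_2)\le\phi_q(n)=\frac{n^{q-1}-1}{q-1}.$$
   Context: $\mathcal P^n(X)$ denotes the set of probability measures on $X$ supported on at most $n$ points; $\Pi(\mu_1,\mu_2)$ the set of couplings. The Tsallis relative entropy is $D_q(\mu,\nu)=\frac{1}{q-1}\int\big[(\frac{d\mu}{d\nu})^q-\frac{d\mu}{d\nu}\big]\,d\nu$ if $\mu\ll\nu$ and $q>1$, $+\infty$ otherwise; $\phi_q(x)=\frac{x^{q-1}-1}{q-1}$ for $q>1$. *)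

From HB Require Import structures.
From mathcomp Require Import all_boot all_order all_algebra.
From mathcomp Require Import all_classical all_reals all_analysis.
Set Implicit Arguments.
Unset Strict Implicit.
Unset Printing Implicit Defensive.
Import Order.TTheory GRing.Theory Num.Theory.
Import numFieldNormedType.Exports.
Local Open Scope classical_set_scope.
Local Open Scope ring_scope.
Local Open Scope charge_scope.

Section polish.
Context (R : realType) (T : Type).

Definition is_metric (dist : T -> T -> R) : Prop :=
  [/\ (forall x y, dist x y = 0 <-> x = y),
      (forall x y, dist x y = dist y x) &
      (forall x y z, dist x z <= dist x y + dist y z)].

Definition metric_open (dist : T -> T -> R) (U : set T) : Prop :=
  forall x, U x -> exists2 e : R, 0 < e & forall y, dist x y < e -> U y.

Definition metric_complete (dist : T -> T -> R) : Prop :=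
  forall u : nat -> T,
    (forall e : R, 0 < e -> exists N : nat, forall m n : nat,
        (N <= m)%N -> (N <= n)%N -> dist (u m) (u n) < e) ->
    exists l : T, forall e : R, 0 < e ->
        exists N : nat, forall n : nat, (N <= n)%N -> dist (u n) l < e.

Definition metric_separable (dist : T -> T -> R) : Prop :=
  exists2 D : set T, countable D &
    forall x (e : R), 0 < e -> exists2 y, D y & dist x y < e.
End polish.

Definition polish_measurable (R : realType) d (T : measurableType d) : Prop :=
  exists dist : T -> T -> R,
    [/\ is_metric dist, metric_complete dist, metric_separable dist &
        (@measurable d T) = <<s metric_open dist >>].

(* mu is a convex combination of n Dirac masses (points may repeat and weights
   may vanish, so this is "supported on at most n points"). *)
Definition supported_on_at_most (R : realType) d (T : measurableType d) (n : nat)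
  (mu : probability T R) : Prop :=
  exists (x : 'I_n -> T) (w : 'I_n -> R),
    [/\ (forall i, 0 <= w i), \sum_(i < n) w i = 1 &
        forall A, measurable A ->
          mu A = (\sum_(i < n) w i * (\1_A (x i) : R))%:E].

Definition is_coupling (R : realType) d1 d2 (T1 : measurableType d1)
  (T2 : measurableType d2) (mu1 : probability T1 R) (mu2 : probability T2 R)
  (pi : probability (T1 * T2)%type R) : Prop :=
  (forall A, measurable A -> pi (A `*` setT) = mu1 A) /\
  (forall B, measurable B -> pi (setT `*` B) = mu2 B).

Definition tsallis_div (R : realType) d (T : measurableType d) (q : R)
  (mu nu : probability T R) : \bar R :=
  if asbool (mu `<< nu) then
    (((q - 1)^-1)%:E *
      \int[nu]_x (let f := fine (('d (charge_of_finite_measure mu) '/d nu) x) in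
                  (f `^ q - f)%:E))%E
  else +oo%E.

Definition phi_q (R : realType) (q x : R) : R := (x `^ (q - 1) - 1) / (q - 1).

From HB Require Import structures.
From mathcomp Require Import all_boot all_order all_algebra.
From mathcomp Require Import all_classical all_reals all_analysis.
From mathcomp Require Import lra measurable_realfun.
Import Order.TTheory GRing.Theory Num.Theory.
Local Open Scope classical_set_scope.
Local Open Scope ring_scope.
Local Open Scope charge_scope.

Set Implicit Arguments.
Unset Strict Implicit.
Unset Printing Implicit Defensive.

(* Write [mu2 = sum_i w_i delta_(x_i)] and [m(y) = mu2{y}].  Then [mu2] is
   carried by the atoms of positive mass, and on the fiber over such an atom
   [y] a coupling satisfies
     [pi(S * {y}) <= mu1(S) = (mu1 \x mu2)(S * {y}) / m(y)].
   Hence [pi << mu1 \x mu2], and its density [f] satisfies [0 <= f <= 1/m(y)]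
   on that fiber, so [f^q <= f m(y)^(1-q)] for [q >= 1].  Integrating,
     [int f^q d(mu1 \x mu2) <= int m(z.2)^(1-q) dpi(z)
                             = sum_i w_i m(x_i)^(1-q) <= sum_i w_i^(2-q)],
   and the last sum is at most [n^(q-1)] by concavity of [t |-> t^(2-q)]
   (here [q <= 2] is used). *)

Section integral_ae_le.
Local Open Scope ereal_scope.
Context d (T : measurableType d) (R : realType) (mu : {measure set T -> \bar R}).

Lemma integral_ae_le (D : set T) (f g : T -> \bar R) : measurable D ->
  mu.-integrable D f -> mu.-integrable D g ->
  (forall E, E `<=` D -> measurable E ->
    \int[mu]_(x in E) f x <= \int[mu]_(x in E) g x) ->
  {ae mu, forall x, D x -> f x <= g x}.
Proof.
move=> mD itf itg fg.
pose E j := D `&` [set x | j.+1%:R^-1%:E <= f x - g x].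
have mf := measurable_int _ itf; have mg := measurable_int _ itg.
have mE j : measurable (E j).
  by apply: measurable_lee => //; exact: emeasurable_funB.
have ED j : E j `<=` D := @subIsetl _ _ _.
have E0 j : mu (E j) = 0.
  apply/eqP; rewrite -measure_le0 -(@pmule_rle0 _ j.+1%:R^-1%:E) ?lte_fin//.
  have <- : \int[mu]_(x in E j) j.+1%:R^-1%:E = j.+1%:R^-1%:E * mu (E j).
    exact: integral_cst.
  apply: le_trans (_ : \int[mu]_(x in E j) (f \- g) x <= 0).
    apply: ge0_le_integral => //; last by move=> x [].
    apply: emeasurable_funB; exact: measurable_funS (ED j) _.
  rewrite integralB ?sube_le0//; first exact: fg.
  - exact: integrableS mD (mE j) (ED j) itf.
  - exact: integrableS mD (mE j) (ED j) itg.
have E_null j : mu.-negligible (E j) := proj2 (negligibleP _ (mE j)) (E0 j).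
apply: (negligibleS _ (negligible_bigcup E_null)).
move=> x /= /not_implyP[Dx /negP]; rewrite -ltNge => gf.
have : [set x | g x < f x] x by [].
by rewrite set_lte_bigcup => -[j _ Ej]; exists j.
Qed.

End integral_ae_le.

Section Radon_Nikodym_bounds.
Local Open Scope ereal_scope.
Context d (T : measurableType d) (R : realType).
Variables (nu : {finite_measure set T -> \bar R})
          (mu : {sigma_finite_measure set T -> \bar R}).
Hypothesis numu : nu `<< mu.
Local Notation f := ('d (charge_of_finite_measure nu) '/d mu).

Let f_integrable : mu.-integrable setT f :=
  @Radon_Nikodym_integrable _ _ _ (charge_of_finite_measure nu) mu numu.

Let f_integral A : measurable A -> nu A = \int[mu]_(x in A) f x :=
  @Radon_Nikodym_integral _ _ _ (charge_of_finite_measure nu) mu A numu.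

Lemma Radon_Nikodym_ge0_ae : {ae mu, forall x, 0 <= f x}.
Proof.
apply: filterS (integral_ae_le measurableT (integrable0 _ _) f_integrable _).
  by move=> x /(_ I).
by move=> E _ mE; rewrite integral0 -f_integral.
Qed.

Lemma Radon_Nikodym_le_ae (D : set T) (c : R) : measurable D ->
  mu D < +oo -> (forall E, E `<=` D -> measurable E -> nu E <= c%:E * mu E) ->
  {ae mu, forall x, D x -> f x <= c%:E}.
Proof.
move=> mD muD nuc; apply: integral_ae_le => //.
- exact: integrableS measurableT mD (subsetT _) f_integrable.
- apply/integrableP; split; first exact: measurable_cst.
  by rewrite integral_cst// lte_mul_pinfty.
- move=> E ED mE; rewrite -f_integral// integral_cst//.
  exact: nuc.
Qed.

End Radon_Nikodym_bounds.

Lemma polish_measurable_set1 (R : realType) d (T : measurableType d) (y : T) :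
  polish_measurable R T -> measurable [set y].
Proof.
move=> [dist [[dist0 distC dist_tri] _ _ mE]].
have dist_ge0 a b : 0 <= dist a b.
  by have := dist_tri a b a; rewrite (distC b a) (proj2 (dist0 a a) erefl); lra.
have openC : metric_open dist (~` [set y]).
  move=> z /= zy; exists (dist z y) => [|u zu uy]; last by rewrite uy ltxx in zu.
  by rewrite lt_def dist_ge0 andbT; apply/eqP => /dist0.
have : measurable (~` [set y]) by rewrite mE; exact: sub_sigma_algebra openC.
by move=> /measurableC; rewrite setCK.
Qed.

Section powR_inequalities.
Context (R : realType).
Implicit Types a b p q s w x : R.

Lemma powR_le_tangent x p : 0 <= x -> 0 <= p <= 1 -> x `^ p <= p * x + (1 - p).
Proof.
move=> x0 /andP[p0 p1].
have [->|p_neq0] := eqVneq p 0; first by rewrite powRr0 mul0r add0r subr0.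
have [->|p_neq1] := eqVneq p 1; first by rewrite powRr1 // mul1r subrr addr0.
have p_gt0 : 0 < p by rewrite lt_def p_neq0.
have p_lt1 : p < 1 by rewrite lt_def eq_sym p_neq1.
(* Young's inequality with the conjugate exponents [1/p] and [1/(1-p)]. *)
have := @conjugate_powR _ (x `^ p) 1 p^-1 (1 - p)^-1.
rewrite powR_ge0 ler01 !invr_gt0 p_gt0 subr_gt0 p_lt1 !invrK addrC subrK.
move=> /(_ isT isT isT isT erefl).
by rewrite mulr1 powR1 -powRrM mulfV ?gt_eqF // powRr1 // mul1r mulrC.
Qed.

Lemma sum_powR_le n (w : 'I_n -> R) p : 0 <= p <= 1 ->
  (forall i, 0 <= w i) -> \sum_(i < n) w i = 1 ->
  \sum_(i < n) w i `^ p <= n%:R `^ (1 - p).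
Proof.
move=> p01 w_ge0 w1.
have n_gt0 : 0 < n%:R :> R.
  by case: n w w_ge0 w1 => [w _|n _ _ _]; rewrite ?big_ord0 ?ltr0Sn //; lra.
have : n%:R `^ p * \sum_(i < n) w i `^ p <= n%:R.
  rewrite mulr_sumr; under eq_bigr do rewrite -powRM ?ler0n //.
  apply: le_trans (ler_sum _ (fun i _ => powR_le_tangent _ p01)) _.
    by move=> i; rewrite mulr_ge0 ?ler0n.
  rewrite big_split /= -!mulr_sumr w1 sumr_const card_ord.
  by rewrite mulr1 -mulr_natr; lra.
rewrite powRB ?(gt_eqF n_gt0) ?implybT // powRr1 ?ler0n //.
by rewrite ler_pdivlMr ?powR_gt0 // mulrC.
Qed.

Lemma powR_le_mul_powR a b q : 0 < b -> 1 <= q -> 0 <= a <= b^-1 ->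
  a `^ q <= a * b `^ (1 - q).
Proof.
move=> b_gt0 q1 /andP[a0 ab].
rewrite -(mulr_powRB1 a0 (lt_le_trans ltr01 q1)) ler_wpM2l //.
have -> : b `^ (1 - q) = b^-1 `^ (q - 1).
  by rewrite -powR_inv1 ?ltW // -powRrM; congr (_ `^ _); lra.
by apply: ge0_ler_powR; rewrite ?nnegrE ?subr_ge0 ?invr_ge0 ?(ltW b_gt0).
Qed.

Lemma mul_powRN_le w b s : 0 <= s -> 0 <= w <= b -> w * b `^ (- s) <= w `^ (1 - s).
Proof.
move=> s0 /andP[w0 wb].
have [->|w_neq0] := eqVneq w 0; first by rewrite mul0r powR_ge0.
have w_gt0 : 0 < w by rewrite lt_def w_neq0.
rewrite powRD ?w_neq0 ?implybT // powRr1 // ler_wpM2l // !powRN.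
rewrite lef_pV2 ?posrE ?powR_gt0 ?(lt_le_trans w_gt0) //.
by apply: ge0_ler_powR; rewrite // nnegrE (le_trans w0).
Qed.

End powR_inequalities.

Section coupling.
Local Open Scope ereal_scope.
Context (R : realType) d1 d2 (X1 : measurableType d1) (X2 : measurableType d2).
Variables (mu1 : probability X1 R) (mu2 : probability X2 R)
  (pi : probability (X1 * X2)%type R).
Hypothesis pi_coupling : is_coupling mu1 mu2 pi.

Lemma product_measure_marginal2 A :
  measurable A -> (mu1 \x mu2) (setT `*` A) = mu2 A.
Proof.
(* [change] exposes [mu1] as a probability, which [rewrite] does not see
   through the measure coercion of the product. *)
move=> mA; rewrite product_measure1E //; change (mu1 setT * mu2 A = mu2 A).
by rewrite probability_setT mul1e.
Qed.

Lemma coupling_fiber_le (y : X2) (E : set (X1 * X2)) :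
  measurable [set y] -> measurable E -> E `<=` setT `*` [set y] ->
  mu2 [set y] * pi E <= (mu1 \x mu2) E.
Proof.
move=> my mE Ey; pose S := ysection E y.
have mS : measurable S := measurable_ysection _ mE.
have -> : E = S `*` [set y].
  apply/seteqP; split => [[a b] Eab|[a b] [/ysectionP Sa /= ->]] //.
  by have [_ /= yb] := Ey _ Eab; split => //=; apply/ysectionP; rewrite -yb.
rewrite product_measure1E // [leRHS]muleC lee_wpmul2l //.
change (pi (S `*` [set y]) <= mu1 S).
rewrite -(pi_coupling.1 _ mS); apply: le_measure; rewrite ?inE.
- exact: measurableX.
- exact: measurableX.
- by move=> z [Sz _]; split.
Qed.

Variables (n : nat) (x : 'I_n -> X2) (w : 'I_n -> R).
Hypothesis w_ge0 : forall i, (0 <= w i)%R.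
Hypothesis mu2E : forall A, measurable A ->
  mu2 A = (\sum_(i < n) w i * \1_A (x i))%:E.
Hypothesis mx : forall i, measurable [set x i].

(* The probability structure of the product is the one [tsallis_div] uses. *)
Local Notation nu := (mu1 \x mu2 : probability (X1 * X2)%type R).
Let mass (y : X2) : R := \sum_(i < n) w i * \1_[set y] (x i).

Let mB i : measurable (@setT X1 `*` [set x i]) := measurableX measurableT (mx i).

Let mass_ge0 y : (0 <= mass y)%R.
Proof. by apply: sumr_ge0 => i _; rewrite mulr_ge0. Qed.

Let mu2_atom i : mu2 [set x i] = (mass (x i))%:E.
Proof. exact: mu2E. Qed.

Let w_le_mass i : (w i <= mass (x i))%R.
Proof.
rewrite /mass (bigD1 i) //= indicE mem_set // mulr1 lerDl.
by apply: sumr_ge0 => j _; rewrite mulr_ge0.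
Qed.

Let ae_atom (rho : {measure set (X1 * X2) -> \bar R}) :
  (forall A, measurable A -> rho (setT `*` A) = mu2 A) ->
  {ae rho, forall z, exists2 i, z.2 = x i & (0 < mass (x i))%R}.
Proof.
move=> rhoE; pose U := \bigcup_(i in [set i | 0 < mass (x i)]%R) [set x i].
have mCU : measurable (~` U).
  by apply: measurableC; apply: fin_bigcup_measurable.
have mN : measurable (@setT X1 `*` ~` U) := measurableX (@measurableT _ X1) mCU.
apply: (negligibleS _ (proj2 (negligibleP _ mN) _)).
  by move=> z /= Nz; split => // -[i mi /= zi]; apply: Nz; exists i.
transitivity (mu2 (~` U)); first exact: rhoE.
rewrite mu2E //; congr EFin; apply: big1 => i _.
have [mi|mi] := ltP 0%R (mass (x i)).
  by rewrite indicE memNset ?mulr0 //= => /(_ (ex_intro2 _ _ i mi erefl)).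
suff -> : w i = 0%R by rewrite mul0r.
by apply/le_anti; rewrite w_ge0 andbT (le_trans (w_le_mass i)).
Qed.

Lemma coupling_dominates : pi `<< nu.
Proof.
apply/null_content_dominatesP => A mA nuA0.
have fiber_ae i : {ae pi, forall z, z.2 = x i -> (0 < mass (x i))%R -> ~ A z}.
  have [mi|_] := ltP 0%R (mass (x i)); last exact: aeW.
  have mAi : measurable (A `&` @setT X1 `*` [set x i]) := measurableI _ _ mA (mB i).
  apply: (negligibleS _ (proj2 (negligibleP _ mAi) _)).
    by move=> z /=; apply: contra_notP => nAz zi _ Az; apply: nAz.
  apply/eqP; rewrite -measure_le0 -(@pmule_rle0 _ (mass (x i))%:E) ?lte_fin //.
  rewrite -mu2_atom -nuA0; apply: le_trans (coupling_fiber_le (mx i) mAi _) _.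
    exact: subIsetr.
  by apply: le_measure; rewrite ?inE //; exact: subIsetl.
have : {ae pi, forall z, ~ A z}.
  apply: filterS2 (@ae_atom pi pi_coupling.2)
    (filter_forall (ae_filter_ringOfSetsType _) fiber_ae).
  by move=> z [i zi mi] /(_ i zi mi).
move=> A_ae; apply/(negligibleP _ mA).
by apply: (negligibleS _ A_ae) => z Az; apply.
Qed.

Local Notation F := ('d (charge_of_finite_measure pi) '/d nu).

Let F_fin z : F z \is a fin_num :=
  @Radon_Nikodym_fin_num _ _ _ (charge_of_finite_measure pi) nu z coupling_dominates.

Let F_integrable : nu.-integrable setT F :=
  @Radon_Nikodym_integrable _ _ _ (charge_of_finite_measure pi) nu coupling_dominates.

Let F_integral A : measurable A -> pi A = \int[nu]_(z in A) F z :=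
  @Radon_Nikodym_integral _ _ _ (charge_of_finite_measure pi) nu A coupling_dominates.

Let density_bound :
  {ae nu, forall z, [/\ (0 < mass z.2)%R, 0 <= F z & F z <= ((mass z.2)^-1)%:E]}.
Proof.
have fiber_le i :
    {ae nu, forall z, z.2 = x i -> (0 < mass (x i))%R -> F z <= ((mass (x i))^-1)%:E}.
  have [mi|_] := ltP 0%R (mass (x i)); last exact: aeW.
  apply: filterS (Radon_Nikodym_le_ae coupling_dominates (mB i) _ _).
  - by move=> z + zi _; apply; split.
  - exact: le_lt_trans (probability_le1 _ (mB i)) (ltry _).
  - move=> E EB mE; rewrite lee_pdivlMl // -mu2_atom.
    exact: coupling_fiber_le.
apply: filterS2 (filterI (@ae_atom nu product_measure_marginal2)
  (Radon_Nikodym_ge0_ae coupling_dominates))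
  (filter_forall (ae_filter_ringOfSetsType _) fiber_le).
by move=> z [[i zi mi] F0] /(_ i zi mi) Fle; rewrite zi.
Qed.

Variable q : R.
Hypothesis q_ge1 : (1 <= q)%R.

(* [G] is [z |-> mass z.2 `^ (1 - q)] on the atoms, written as a simple
   function so that its [pi]-integral only involves the second marginal. *)
Let c i : R := w i * mass (x i) `^ (- q).
Let G (z : X1 * X2) : R := \sum_(i < n) c i * \1_(setT `*` [set x i]) z.

Let measurable_G : measurable_fun setT G.
Proof.
apply: measurable_sum => i; apply: measurable_funM => //.
Qed.

Let G_ge0 z : (0 <= G z)%R.
Proof. by apply: sumr_ge0 => i _; rewrite mulr_ge0 ?mulr_ge0 ?powR_ge0. Qed.

Let G_atom z : (0 < mass z.2)%R -> G z = (mass z.2 `^ (1 - q))%R.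
Proof.
move=> mz; transitivity (mass z.2 `^ (- q) * mass z.2)%R; last first.
  by rewrite powRD ?lt0r_neq0 ?implybT // powRr1 ?ltW // mulrC.
rewrite /G mulr_sumr; apply: eq_bigr => i _; rewrite /c.
have [zi|zi] := pselect (z.2 = x i).
  have zB : (setT `*` [set x i]) z by [].
  by rewrite indicE (mem_set zB) zi indicE mem_set //= !mulr1 mulrC.
by rewrite !indicE !memNset ?mulr0 // => [/esym|[]].
Qed.

Let integral_G : \int[pi]_z (G z)%:E = (\sum_(i < n) c i * mass (x i))%:E.
Proof.
rewrite /G; under eq_integral do rewrite -sumEFin.
rewrite ge0_integral_sum //; last 2 first.
- by move=> i; apply/measurable_EFinP; apply: measurable_funM.
- by move=> i z _; rewrite lee_fin mulr_ge0 ?mulr_ge0 ?powR_ge0.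
rewrite -sumEFin; apply: eq_bigr => i _; under eq_integral do rewrite EFinM.
rewrite ge0_integralZl_EFin ?mulr_ge0 ?powR_ge0 //; last first.
  by apply/measurable_EFinP; exact: measurable_indic (mB i).
rewrite integral_indic // setIT [RHS]EFinM -mu2_atom; congr (_ * _).
exact: pi_coupling.2.
Qed.

Let sum_c_mass_le : (\sum_(i < n) c i * mass (x i) <= \sum_(i < n) w i `^ (2 - q))%R.
Proof.
apply: ler_sum => i _; have [->|m_neq0] := eqVneq (mass (x i)) 0%R.
  by rewrite mulr0 powR_ge0.
rewrite /c -mulrA -{2}(powRr1 (mass_ge0 (x i))) -powRD ?m_neq0 ?implybT //.
rewrite (_ : - q + 1 = - (q - 1))%R; last by lra.
rewrite (_ : 2 - q = 1 - (q - 1))%R; last by lra.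
by apply: mul_powRN_le; rewrite ?subr_ge0 ?w_ge0 ?w_le_mass.
Qed.

Let f z : R := fine (F z).

Let fE z : (f z)%:E = F z. Proof. exact: fineK. Qed.

Let integrable_f : nu.-integrable setT (EFin \o f).
Proof. by apply: (eq_integrable _ F) F_integrable => // z _; rewrite /= fE. Qed.

Let measurable_f : measurable_fun setT f.
Proof. by apply/measurable_EFinP; exact: measurable_int integrable_f. Qed.

Let integral_f : \int[nu]_z (f z)%:E = 1.
Proof.
rewrite (eq_integral F); last by move=> z _; rewrite fE.
by rewrite -F_integral // probability_setT.
Qed.

Let integral_abs_f_G :
  \int[nu]_z (`|f z| * G z)%:E = (\sum_(i < n) c i * mass (x i))%:E.
Proof.
have G_int : pi.-integrable setT (EFin \o G).
  apply/integrableP; split; first exact/measurable_EFinP.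
  under eq_integral do rewrite /= ger0_norm //.
  by rewrite integral_G ltry.
rewrite -integral_G.
rewrite -(Radon_Nikodym_change_of_variables coupling_dominates measurableT G_int).
apply: ae_eq_integral => //.
- apply/measurable_EFinP; apply: measurable_funM => //.
  exact: measurableT_comp measurable_f.
- apply: emeasurable_funM; first exact/measurable_EFinP.
  exact: measurable_int F_integrable.
apply: filterS density_bound => z [_ F0 _] _.
by rewrite ger0_norm ?fine_ge0 // EFinM fE muleC.
Qed.

Let integral_powR_f_le :
  \int[nu]_z (f z `^ q)%:E <= (\sum_(i < n) c i * mass (x i))%:E.
Proof.
rewrite -integral_abs_f_G; apply: ae_ge0_le_integral => //.
- by move=> z _; rewrite lee_fin powR_ge0.
- by apply/measurable_EFinP; exact: measurableT_comp (measurable_powR q) measurable_f.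
- by move=> z _; rewrite lee_fin mulr_ge0.
- apply/measurable_EFinP; apply: measurable_funM => //.
  exact: measurableT_comp measurable_f.
apply: filterS density_bound => z [mz F0 Fle] _.
rewrite -fE lee_fin in F0 Fle.
rewrite lee_fin ger0_norm // G_atom //; apply: powR_le_mul_powR => //.
exact/andP.
Qed.

Lemma coupling_tsallis_integral_le :
  \int[nu]_z ((fine (F z)) `^ q - fine (F z))%:E <=
  (\sum_(i < n) w i `^ (2 - q) - 1)%:E.
Proof.
have fq_int : nu.-integrable setT (EFin \o (fun z => f z `^ q)%R).
  apply/integrableP; split.
    apply/measurable_EFinP.
    exact: measurableT_comp (measurable_powR q) measurable_f.
  rewrite (eq_integral (fun z => (f z `^ q)%:E)); last first.
    by move=> z _ /=; rewrite ger0_norm ?powR_ge0.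
  exact: le_lt_trans integral_powR_f_le (ltry _).
under eq_integral do rewrite EFinB.
rewrite integralB_EFin // integral_f EFinB leeB //.
by apply: le_trans integral_powR_f_le _; rewrite lee_fin sum_c_mass_le.
Qed.

End coupling.

Theorem lemma2p1 (R : realType) (d1 d2 : measure_display)
  (X1 : measurableType d1) (X2 : measurableType d2)
  (hX1 : polish_measurable R X1) (hX2 : polish_measurable R X2)
  (n : nat) (mu1 : probability X1 R) (mu2 : probability X2 R)
  (hmu2 : supported_on_at_most n mu2)
  (pi : probability (X1 * X2)%type R) (hpi : is_coupling mu1 mu2 pi)
  (q : R) (hq1 : 1 < q) (hq2 : q <= 2) :
  (tsallis_div q pi (mu1 \x mu2) <= (phi_q q n%:R)%:E)%E.
Proof.
have [x [w [w_ge0 w1 mu2E]]] := hmu2.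
have mx i : measurable [set x i] := polish_measurable_set1 (x i) hX2.
rewrite /tsallis_div asboolT; last exact: (coupling_dominates hpi w_ge0 mu2E mx).
have key := coupling_tsallis_integral_le hpi w_ge0 mu2E mx (ltW hq1).
apply: le_trans (lee_wpmul2l _ key) _.
  by rewrite lee_fin invr_ge0 subr_ge0 ltW.
rewrite -EFinM lee_fin /phi_q mulrC ler_wpM2r ?invr_ge0 ?subr_ge0 ?(ltW hq1) //.
rewrite lerD2r (_ : q - 1 = 1 - (2 - q)); last by lra.
by apply: sum_powR_le => //; apply/andP; split; lra.
Qed.
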